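(* Let $c>1$, $\sigma=1-\frac1c$, and let $p,q\in[1,\infty)$ satisfy $(p-1)(q-1)=\sigma^2$. Then for every $\gamma\in[0,1]$ and every $m\ge1$, $$\Phi_r\!\left(\frac1m,\gamma\right)\ \ge\ \gamma^q\,m^{1+\frac qp-q}.$$
   Context: Work on $V=\{-1,1\}^d$ with the uniform probability measure $\mu$. For $x\in\{-1,1\}^d$, $N_\sigma(x)$ is the distribution of $y$ obtained by independently, for each coordinate $i$, setting $y_i=x_i$ with probability $\sigma$ and $y_i$ uniform in $\{-1,1\}$ otherwise. Let $e$ be the joint distribution of the pair $(x,y)$ with $x\sim\mu$ (data point) and $y\sim N_\sigma(x)$ (query); both marginals are $\mu$. The robust expansion is $$\Phi_r(\delta,\gamma)=\min_{A\subseteq V:\ 0<\mu(A)\le\delta}\ \ \min_{B\subseteq V:\ \Pr_{(x,y)\sim e}[x\in B\mid y\in A]\ge\gamma}\ \frac{\mu(B)}{\mu(A)}.$$ *)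

From Stdlib Require Import Reals Lra List.
Import ListNotations.
Open Scope R_scope.

(* Points of {-1,1}^d are encoded as boolean lists of length d
   (true = +1, false = -1). *)
Fixpoint cube (d : nat) : list (list bool) :=
  match d with
  | O => [ [] ]
  | S d' => flat_map (fun v => [true :: v; false :: v]) (cube d')
  end.

(* Subsets of V are boolean predicates; only their values on [cube d] matter. *)
Definition subset_V := list bool -> bool.

Definition sumR {T : Type} (f : T -> R) (l : list T) : R :=
  fold_right (fun v acc => f v + acc) 0 l.

Definition ind (b : bool) : R := if b then 1 else 0.

Definition mu (d : nat) (A : subset_V) : R :=
  sumR (fun v => ind (A v)) (cube d) / 2 ^ d.

(* Transition probability Pr[y | x] for y ~ N_sigma(x): each coordinate is
   kept with prob. sigma, otherwise resampled uniformly; hence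
   Pr[y_i = x_i] = (1+sigma)/2 and Pr[y_i <> x_i] = (1-sigma)/2. *)
Fixpoint noise_kernel (sigma : R) (x y : list bool) : R :=
  match x, y with
  | a :: x', b :: y' =>
      (if Bool.eqb a b then (1 + sigma) / 2 else (1 - sigma) / 2)
      * noise_kernel sigma x' y'
  | _, _ => 1
  end.

(* Joint law e of (x,y): x ~ mu, y ~ N_sigma(x).
   joint_prob d sigma B A = Pr_{(x,y)~e}[x in B /\ y in A]. *)
Definition joint_prob (d : nat) (sigma : R) (B A : subset_V) : R :=
  sumR (fun x => sumR (fun y =>
          ind (B x) * ind (A y) * (/ 2 ^ d) * noise_kernel sigma x y)
        (cube d)) (cube d).

(* Pr_{(x,y)~e}[x in B | y in A]; the y-marginal of e is mu. *)
Definition cond_prob (d : nat) (sigma : R) (B A : subset_V) : R :=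
  joint_prob d sigma B A / mu d A.

(* The set of values over which the robust expansion Phi_r(delta,gamma)
   is the minimum:  { mu(B)/mu(A) : 0 < mu(A) <= delta,
                                    Pr[x in B | y in A] >= gamma }. *)
Definition Phi_r_values (d : nat) (sigma delta gamma : R) (r : R) : Prop :=
  exists A B : subset_V,
    0 < mu d A /\ mu d A <= delta /\
    cond_prob d sigma B A >= gamma /\
    r = mu d B / mu d A.

(* Phi_r(delta,gamma) >= L, i.e. L is a lower bound of the (finite) set whose
   minimum is Phi_r (with the convention min of the empty set = +infinity). *)
Definition Phi_r_ge (d : nat) (sigma delta gamma L : R) : Prop :=
  forall r, Phi_r_values d sigma delta gamma r -> r >= L.

(* Real power x^y for x >= 0, with the convention 0^y = 0 (y > 0);
   Stdlib's Rpower 0 y would be 1. *)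
Definition rpow (x y : R) : R := if Req_EM_T x 0 then 0 else Rpower x y.

(* The bound follows from the two-function hypercontractive inequality
   [Pr[x in B, y in A] <= mu(B)^(1/q) mu(A)^(1/p)], valid when
   [(p-1)(q-1) = sigma^2]: combined with [Pr[x in B, y in A] >= gamma mu(A)] it gives
   [mu(B) >= gamma^q mu(A)^(q - q/p)], and [q - q/p - 1 <= 0] together with
   [mu(A) <= 1/m] turns this into the claimed ratio.  The two-function inequality
   tensorises over the coordinates, so it suffices to prove it on [{-1,1}]; there
   Hölder's inequality with the exponent dual to [p] reduces it to Bonami's
   two-point inequality [||1 + rho e||_r <= ||1 + e||_s] for [rho^2 (r-1) = s-1].
   The latter holds because, with [r] tied to [rho], the left-hand side is
   nondecreasing in [rho]; the sign of its derivative is the two-point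
   log-Sobolev inequality combined with a Stroock-Varopoulos inequality. *)

From Coquelicot Require Import Coquelicot.
From Stdlib Require Import Reals Lra List.
Import ListNotations.
Open Scope R_scope.

Lemma le_of_derive_nonneg (f df : R -> R) (a b : R) : a <= b ->
  (forall x, a <= x <= b -> is_derive f x (df x)) ->
  (forall x, a <= x <= b -> 0 <= df x) -> f a <= f b.
Proof.
  intros Hab Hd Hpos.
  destruct (MVT_gen f a b df) as [c [Hc Heq]];
    rewrite ?Rmin_left, ?Rmax_right in * by lra.
  - intros x Hx. apply Hd; lra.
  - intros x Hx. apply continuity_pt_filterlim, (ex_derive_continuous f).
    eexists. apply Hd; lra.
  - assert (0 <= df c * (b - a)) by (apply Rmult_le_pos; [apply Hpos|]; lra).
    lra.
Qed.

Lemma exp_le_compat x y : x <= y -> exp x <= exp y.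
Proof.
  intro Hxy. destruct (Req_dec x y) as [->|Hne]; [lra|].
  apply Rlt_le, exp_increasing. lra.
Qed.

Lemma rpow_0l y : rpow 0 y = 0.
Proof. unfold rpow. destruct (Req_EM_T 0 0); [reflexivity|lra]. Qed.

Lemma rpow_exp x y : 0 < x -> rpow x y = exp (y * ln x).
Proof. intro Hx. unfold rpow. destruct (Req_EM_T x 0); [lra|reflexivity]. Qed.

Lemma rpow_ge0 x y : 0 <= rpow x y.
Proof.
  unfold rpow. destruct (Req_EM_T x 0); [lra|]. left. apply exp_pos.
Qed.

Lemma rpow_eq0 x y : 0 <= x -> rpow x y = 0 -> x = 0.
Proof.
  intros Hx H. destruct (Req_dec x 0) as [|Hx0]; [assumption|].
  rewrite rpow_exp in H by lra. pose proof (exp_pos (y * ln x)). lra.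
Qed.

Lemma rpow_1l y : rpow 1 y = 1.
Proof. rewrite rpow_exp, ln_1, Rmult_0_r by lra. apply exp_0. Qed.

Lemma rpow_1r x : 0 <= x -> rpow x 1 = x.
Proof.
  intro Hx. destruct (Req_dec x 0) as [->|Hx0]; [apply rpow_0l|].
  rewrite rpow_exp, Rmult_1_l by lra. apply exp_ln. lra.
Qed.

Lemma rpow_le_l x z y : 0 <= x <= z -> 0 <= y -> rpow x y <= rpow z y.
Proof.
  intros Hxz Hy. destruct (Req_dec x 0) as [->|Hx0].
  - rewrite rpow_0l. apply rpow_ge0.
  - rewrite !rpow_exp by lra. apply exp_le_compat, Rmult_le_compat_l; [lra|].
    apply ln_le; lra.
Qed.

Lemma rpow_mult_l x z y : 0 <= x -> 0 <= z -> rpow (x * z) y = rpow x y * rpow z y.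
Proof.
  intros Hx Hz.
  destruct (Req_dec x 0) as [->|Hx0]; [rewrite Rmult_0_l, !rpow_0l; ring|].
  destruct (Req_dec z 0) as [->|Hz0]; [rewrite Rmult_0_r, !rpow_0l; ring|].
  rewrite !rpow_exp, ln_mult, <- exp_plus by nra. f_equal. ring.
Qed.

Lemma rpow_rpow x y z : 0 <= x -> rpow (rpow x y) z = rpow x (y * z).
Proof.
  intro Hx. destruct (Req_dec x 0) as [->|Hx0]; [rewrite !rpow_0l; reflexivity|].
  rewrite (rpow_exp x y), rpow_exp, ln_exp, rpow_exp by (try apply exp_pos; lra).
  f_equal. ring.
Qed.

Lemma rpow_rpow_inv x y : 0 <= x -> y <> 0 -> rpow (rpow x y) (/ y) = x.
Proof. intros Hx Hy. rewrite rpow_rpow, Rinv_r by assumption. apply rpow_1r, Hx. Qed.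

Lemma rpow_le_self a s : 0 <= a <= 1 -> 1 <= s -> rpow a s <= a.
Proof.
  intros Ha Hs. destruct (Req_dec a 0) as [->|Ha0]; [rewrite rpow_0l; lra|].
  rewrite rpow_exp by lra. rewrite <- (exp_ln a) at 2 by lra.
  apply exp_le_compat.
  assert (ln a <= 0) by (rewrite <- ln_1; apply ln_le; lra).
  nra.
Qed.

(** * Two-point functional inequalities *)

Lemma two_point_log_sobolev (t v : R) : 0 < t -> 0 < v ->
  v*v*ln v + t*t*ln t - (v*v + t*t)/2 * ln ((v*v + t*t)/2) <= (v - t)*(v - t)/2.
Proof.
  intros Ht Hv.
  set (g := fun v => v*v*ln v + t*t*ln t - (v*v + t*t)/2 * ln ((v*v + t*t)/2)
                     - (v - t)*(v - t)/2).
  set (h := fun v => 2 * ln v - ln ((v*v + t*t)/2) - 1 + t / v).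
  (* [g' = w h w], and [h] is nonincreasing with [h t = 0]: [t] minimises [g]. *)
  assert (Hg' : forall w, 0 < w -> is_derive g w (w * h w)).
  { intros w Hw. unfold g, h. auto_derive.
    - repeat split; nra.
    - unfold Rdiv. field. nra. }
  assert (Hh' : forall w, 0 < w ->
            is_derive (fun x => - h x) w (t*(w - t)*(w - t)/(w*w*(w*w + t*t)))).
  { intros w Hw. unfold h. auto_derive.
    - repeat split; nra.
    - unfold Rdiv. field. nra. }
  assert (Hht : h t = 0).
  { unfold h. replace ((t*t + t*t)/2) with (t*t) by field.
    rewrite ln_mult by lra. field. lra. }
  assert (Hgt : g t = 0).
  { unfold g. replace ((t*t + t*t)/2) with (t*t) by field.
    rewrite ln_mult by lra. lra. }
  assert (Hh_antitone : forall a b, 0 < a -> a <= b -> h b <= h a).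
  { intros a b Ha Hab.
    enough (- h a <= - h b) by lra.
    apply (le_of_derive_nonneg (fun x => - h x)
             (fun w => t*(w - t)*(w - t)/(w*w*(w*w + t*t))) a b Hab);
      intros x Hx; [apply Hh'; lra|].
    assert (0 < x*x) by nra.
    apply Rmult_le_pos; [|apply Rlt_le, Rinv_0_lt_compat; nra].
    rewrite Rmult_assoc. apply Rmult_le_pos; [lra|apply Rle_0_sqr]. }
  enough (g v <= 0) by (unfold g in *; lra).
  destruct (Rle_dec t v) as [Htv|Htv].
  - enough (- g t <= - g v) by lra.
    apply (le_of_derive_nonneg (fun x => - g x) (fun w => - (w * h w)) t v Htv).
    + intros x Hx. apply (is_derive_opp g), Hg'. lra.
    + intros x Hx. pose proof (Hh_antitone t x Ht (proj1 Hx)). nra.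
  - rewrite <- Hgt. apply (le_of_derive_nonneg g (fun w => w * h w) v t); [lra| |].
    + intros x Hx. apply Hg'. lra.
    + intros x Hx. pose proof (Hh_antitone x t ltac:(lra) (proj2 Hx)). nra.
Qed.

Lemma cosh_ge1 z : 1 <= cosh z.
Proof.
  unfold cosh. pose proof (exp_ineq1_le z). pose proof (exp_ineq1_le (- z)). lra.
Qed.

Lemma cosh_abs z : cosh (Rabs z) = cosh z.
Proof.
  unfold Rabs. destruct (Rcase_abs z); [|reflexivity].
  unfold cosh. rewrite Ropp_involutive. field.
Qed.

Lemma sinh_ge0 z : 0 <= z -> 0 <= sinh z.
Proof.
  intro Hz. destruct Hz as [Hz|<-]; [|rewrite sinh_0; lra].
  rewrite <- sinh_0. left. apply sinh_lt, Hz.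
Qed.

Lemma sinh_le_mul_cosh z : 0 <= z -> sinh z <= z * cosh z.
Proof.
  intro Hz.
  enough (0 * cosh 0 - sinh 0 <= z * cosh z - sinh z) by (rewrite sinh_0 in *; lra).
  apply (le_of_derive_nonneg (fun z => z * cosh z - sinh z) (fun z => z * sinh z) 0 z Hz).
  - intros x _. unfold cosh, sinh. auto_derive; [exact I|field].
  - intros x Hx. apply Rmult_le_pos; [|apply sinh_ge0]; lra.
Qed.

Lemma cosh_sub1_le_mul_sinh z : 0 <= z -> 2 * (cosh z - 1) <= z * sinh z.
Proof.
  intro Hz.
  enough (0 * sinh 0 - 2 * cosh 0 <= z * sinh z - 2 * cosh z)
    by (rewrite sinh_0, cosh_0 in *; lra).
  apply (le_of_derive_nonneg (fun z => z * sinh z - 2 * cosh z)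
           (fun z => z * cosh z - sinh z) 0 z Hz).
  - intros x _. unfold cosh, sinh. auto_derive; [exact I|field].
  - intros x Hx. pose proof (sinh_le_mul_cosh x (proj1 Hx)). lra.
Qed.

(* [(cosh z - 1) / z^2] is nondecreasing on [0, +oo). *)
Lemma cosh_sub1_ratio_le a b : 0 <= b <= a -> a*a*(cosh b - 1) <= b*b*(cosh a - 1).
Proof.
  intros [Hb Hba]. destruct Hb as [Hb|<-].
  2: { rewrite cosh_0. pose proof (cosh_ge1 a). nra. }
  set (F := fun z => (cosh z - 1) / (z*z)).
  assert (HF : F b <= F a).
  { apply (le_of_derive_nonneg F (fun z => (z * sinh z - 2 * (cosh z - 1)) / (z*z*z))
             b a Hba).
    - intros x Hx. unfold F, cosh, sinh. auto_derive; [nra|field; lra].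
    - intros x Hx. pose proof (cosh_sub1_le_mul_sinh x ltac:(lra)).
      apply Rmult_le_pos; [lra|]. apply Rlt_le, Rinv_0_lt_compat.
      apply Rmult_lt_0_compat; nra. }
  unfold F in HF. apply (Rmult_le_compat_r (a*a*(b*b))) in HF; [|nra].
  replace ((cosh b - 1) / (b*b) * (a*a*(b*b))) with (a*a*(cosh b - 1)) in HF
    by (field; lra).
  replace ((cosh a - 1) / (a*a) * (a*a*(b*b))) with (b*b*(cosh a - 1)) in HF
    by (field; lra).
  exact HF.
Qed.

Lemma stroock_varopoulos_cosh (r d : R) : 1 < r ->
  4*(r - 1)*(cosh (r*d) - 1) <= r*r*(cosh (r*d) - cosh ((2 - r)*d)).
Proof.
  intro Hr.
  assert (Hsq : (2 - r)*d*((2 - r)*d) <= r*d*(r*d)).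
  { assert (0 <= (r - 1)*(d*d)) by (apply Rmult_le_pos; nra). nra. }
  pose proof (cosh_sub1_ratio_le (Rabs (r*d)) (Rabs ((2 - r)*d))) as H.
  assert (Habs_sqr : forall z, Rabs z * Rabs z = z * z).
  { intro z. rewrite <- Rabs_mult. apply Rabs_pos_eq. nra. }
  rewrite !cosh_abs, !Habs_sqr in H.
  assert (H' : r*r*(cosh ((2 - r)*d) - 1) <= (2 - r)*(2 - r)*(cosh (r*d) - 1)).
  { destruct (Req_dec d 0) as [->|Hd].
    - rewrite !Rmult_0_r, cosh_0. lra.
    - apply (Rmult_le_reg_r (d*d)); [nra|].
      specialize (H (conj (Rabs_pos _) (Rsqr_le_abs_0 _ _ Hsq))).
      nra. }
  pose proof (cosh_ge1 (r*d)). nra.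
Qed.

Lemma stroock_varopoulos (r la lb : R) : 1 < r ->
  4*(r - 1)*((exp (r/2*la) - exp (r/2*lb))*(exp (r/2*la) - exp (r/2*lb)))
  <= r*r*((exp la - exp lb)*(exp ((r - 1)*la) - exp ((r - 1)*lb))).
Proof.
  intro Hr.
  set (c := (la + lb)/2). set (d := (la - lb)/2).
  assert (Hlhs : (exp (r/2*la) - exp (r/2*lb))*(exp (r/2*la) - exp (r/2*lb))
                 = 2 * exp (r*c) * (cosh (r*d) - 1)).
  { unfold cosh.
    replace (2 * exp (r*c) * ((exp (r*d) + exp (- (r*d)))/2 - 1))
      with (exp (r*c) * exp (r*d) + exp (r*c) * exp (- (r*d)) - 2 * exp (r*c))
      by field.
    replace (exp (r*c)) with (exp (r/2*la) * exp (r/2*lb)) at 3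
      by (rewrite <- exp_plus; f_equal; unfold c; field).
    rewrite <- !exp_plus.
    replace (r*c + r*d) with (r/2*la + r/2*la) by (unfold c, d; field).
    replace (r*c + - (r*d)) with (r/2*lb + r/2*lb) by (unfold c, d; field).
    rewrite !exp_plus. ring. }
  assert (Hrhs : (exp la - exp lb)*(exp ((r - 1)*la) - exp ((r - 1)*lb))
                 = 2 * exp (r*c) * (cosh (r*d) - cosh ((2 - r)*d))).
  { unfold cosh.
    replace (2 * exp (r*c) * ((exp (r*d) + exp (- (r*d)))/2
                              - (exp ((2 - r)*d) + exp (- ((2 - r)*d)))/2))
      with (exp (r*c) * exp (r*d) + exp (r*c) * exp (- (r*d))
            - exp (r*c) * exp ((2 - r)*d) - exp (r*c) * exp (- ((2 - r)*d)))
      by field.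
    rewrite <- !exp_plus.
    replace (r*c + r*d) with (la + (r - 1)*la) by (unfold c, d; field).
    replace (r*c + - (r*d)) with (lb + (r - 1)*lb) by (unfold c, d; field).
    replace (r*c + (2 - r)*d) with (la + (r - 1)*lb) by (unfold c, d; field).
    replace (r*c + - ((2 - r)*d)) with (lb + (r - 1)*la) by (unfold c, d; field).
    rewrite !exp_plus. ring. }
  rewrite Hlhs, Hrhs.
  pose proof (stroock_varopoulos_cosh r d Hr). pose proof (exp_pos (r*c)).
  nra.
Qed.

Lemma two_point_entropy_bound (r la lb : R) : 1 < r ->
  let M := (exp (r*la) + exp (r*lb))/2 in
  2*(r - 1)*((exp (r*la)*(r*la) + exp (r*lb)*(r*lb))/2 - M * ln M)
  <= r*r/4*((exp la - exp lb)*(exp ((r - 1)*la) - exp ((r - 1)*lb))).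
Proof.
  intros Hr M.
  (* log-Sobolev for [v = exp (r la / 2)], [t = exp (r lb / 2)], then Stroock-Varopoulos *)
  pose proof (stroock_varopoulos r la lb Hr) as HSV.
  set (v := exp (r/2*la)) in *. set (t := exp (r/2*lb)) in *.
  pose proof (two_point_log_sobolev t v (exp_pos _) (exp_pos _)) as HLS.
  assert (Hv : v*v = exp (r*la)) by (unfold v; rewrite <- exp_plus; f_equal; field).
  assert (Ht : t*t = exp (r*lb)) by (unfold t; rewrite <- exp_plus; f_equal; field).
  assert (Hlv : ln v = r/2*la) by apply ln_exp.
  assert (Hlt : ln t = r/2*lb) by apply ln_exp.
  rewrite Hv, Ht, Hlv, Hlt in HLS. fold M in HLS.
  assert (0 <= (v - t)*(v - t)) by apply Rle_0_sqr.
  nra.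
Qed.

(** * Bonami's two-point inequality *)

(* [bonami_exponent s rho] is the [r] with [rho^2 (r - 1) = s - 1]. *)
Definition bonami_exponent (s rho : R) : R := 1 + (s - 1)/(rho*rho).

Definition mean_pow (r y : R) : R := (exp (r * ln (1 + y)) + exp (r * ln (1 - y)))/2.

Definition log_noisy_norm (s x rho : R) : R :=
  / bonami_exponent s rho * ln (mean_pow (bonami_exponent s rho) (rho*x)).

Definition log_noisy_norm_derive (s x rho : R) : R :=
  let r := bonami_exponent s rho in
  let la := ln (1 + rho*x) in
  let lb := ln (1 - rho*x) in
  let M := mean_pow r (rho*x) in
  (r*r/4*((exp la - exp lb)*(exp ((r - 1)*la) - exp ((r - 1)*lb)))
   - 2*(r - 1)*((exp (r*la)*(r*la) + exp (r*lb)*(r*lb))/2 - M * ln M))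
  / (rho*r*r*M).

Lemma mean_pow_gt0 r y : 0 < mean_pow r y.
Proof.
  unfold mean_pow.
  pose proof (exp_pos (r * ln (1 + y))). pose proof (exp_pos (r * ln (1 - y))). lra.
Qed.

Lemma is_derive_log_noisy_norm (s x rho : R) : 1 < s -> 0 < rho -> -1 < rho*x < 1 ->
  is_derive (log_noisy_norm s x) rho (log_noisy_norm_derive s x rho).
Proof.
  intros Hs Hrho Hrx. unfold log_noisy_norm_derive.
  assert (Hrho2 : 0 < rho*rho) by nra.
  assert (Hq : 0 < (s - 1) * / (rho*rho)) by (apply Rdiv_lt_0_compat; lra).
  unfold log_noisy_norm, mean_pow, bonami_exponent. auto_derive.
  - pose proof (exp_pos ((1 + (s - 1) * / (rho * rho)) * ln (1 + rho * x))).
    pose proof (exp_pos ((1 + (s - 1) * / (rho * rho)) * ln (1 + - (rho * x)))).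
    repeat split; lra.
  - replace (1 + - (rho*x)) with (1 - rho*x) by ring.
    cbv zeta. unfold Rdiv.
    rewrite !exp_ln by lra.
    set (r := 1 + (s - 1) * / (rho * rho)).
    set (la := ln (1 + rho*x)). set (lb := ln (1 - rho*x)).
    assert (Ea : exp ((r + -1)*la) = exp (r*la) * / (1 + rho*x)).
    { assert (Hsplit : exp ((r + -1)*la) * exp la = exp (r*la))
        by (rewrite <- exp_plus; f_equal; ring).
      unfold la in *. rewrite exp_ln in Hsplit by lra.
      rewrite <- Hsplit. field. lra. }
    assert (Eb : exp ((r + -1)*lb) = exp (r*lb) * / (1 - rho*x)).
    { assert (Hsplit : exp ((r + -1)*lb) * exp lb = exp (r*lb))
        by (rewrite <- exp_plus; f_equal; ring).
      unfold lb in *. rewrite exp_ln in Hsplit by lra.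
      rewrite <- Hsplit. field. lra. }
    replace (r - 1) with (r + -1) by ring.
    rewrite Ea, Eb.
    pose proof (exp_pos (r*la)). pose proof (exp_pos (r*lb)).
    unfold r in *. field. repeat split; lra.
Qed.

(* Along [rho], with the exponent tied to [rho] by [rho^2 (r - 1) = s - 1], the norm
   [||1 + rho x||_r] is nondecreasing: by [two_point_entropy_bound] the numerator of
   its logarithmic derivative is nonnegative. *)
Lemma log_noisy_norm_le_1 (s x rho : R) : 1 < s -> 0 <= x < 1 -> 0 < rho <= 1 ->
  log_noisy_norm s x rho <= log_noisy_norm s x 1.
Proof.
  intros Hs Hx Hrho.
  apply (le_of_derive_nonneg _ (log_noisy_norm_derive s x) rho 1 (proj2 Hrho)).
  - intros y Hy. apply is_derive_log_noisy_norm; nra.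
  - intros y Hy. unfold log_noisy_norm_derive. cbv zeta.
    set (r := bonami_exponent s y).
    assert (Hr : 1 < r).
    { unfold r, bonami_exponent.
      enough (0 < (s - 1)/(y*y)) by lra.
      apply Rdiv_lt_0_compat; nra. }
    pose proof (two_point_entropy_bound r (ln (1 + y*x)) (ln (1 - y*x)) Hr) as H.
    cbv zeta in H. fold (mean_pow r (y*x)) in H.
    pose proof (mean_pow_gt0 r (y*x)).
    apply Rmult_le_pos; [lra|].
    apply Rlt_le, Rinv_0_lt_compat. apply Rmult_lt_0_compat; [|lra].
    apply Rmult_lt_0_compat; [|lra]. nra.
Qed.

Lemma log_bonami (s r rho x : R) : 1 < s < r -> 0 <= x < 1 -> 0 < rho ->
  rho*rho*(r - 1) = s - 1 ->
  / r * ln (mean_pow r (rho*x)) <= / s * ln (mean_pow s x).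
Proof.
  intros Hs Hx Hrho Hrel.
  assert (Hrho1 : rho <= 1).
  { destruct (Rle_dec rho 1) as [|Hn]; [assumption|].
    assert (1 < rho*rho) by nra. nra. }
  pose proof (log_noisy_norm_le_1 s x rho (proj1 Hs) Hx (conj Hrho Hrho1)) as H.
  unfold log_noisy_norm in H.
  replace (bonami_exponent s rho) with r in H
    by (unfold bonami_exponent; field_simplify_eq; nra).
  replace (bonami_exponent s 1) with s in H by (unfold bonami_exponent; field).
  rewrite Rmult_1_l in H. exact H.
Qed.

Definition norm2 (p a1 a2 : R) : R := rpow ((rpow a1 p + rpow a2 p)/2) (/ p).

Lemma norm2_ge0 p a1 a2 : 0 <= norm2 p a1 a2.
Proof. apply rpow_ge0. Qed.

Lemma norm2C p a1 a2 : norm2 p a1 a2 = norm2 p a2 a1.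
Proof. unfold norm2. f_equal. field. Qed.

Lemma norm2_mean_pow r y : -1 < y < 1 ->
  norm2 r (1 + y) (1 - y) = exp (/ r * ln (mean_pow r y)).
Proof.
  intro Hy. unfold norm2.
  rewrite (rpow_exp (1 + y)), (rpow_exp (1 - y)) by lra.
  rewrite rpow_exp by apply mean_pow_gt0. reflexivity.
Qed.

Lemma norm2_le_endpoint s e : 1 <= s -> -1 < e < 1 ->
  norm2 s (1 + e) (1 - e) <= norm2 s 2 0.
Proof.
  intros Hs He. unfold norm2.
  apply rpow_le_l; [|left; apply Rinv_0_lt_compat; lra].
  split; [pose proof (rpow_ge0 (1 + e) s); pose proof (rpow_ge0 (1 - e) s); lra|].
  rewrite rpow_0l.
  replace (1 + e) with (2*((1 + e)/2)) by field.
  replace (1 - e) with (2*((1 - e)/2)) by field.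
  rewrite !rpow_mult_l by lra.
  pose proof (rpow_le_self ((1 + e)/2) s ltac:(lra) Hs).
  pose proof (rpow_le_self ((1 - e)/2) s ltac:(lra) Hs).
  pose proof (rpow_ge0 2 s). nra.
Qed.

Lemma continuity_pt_le_left (F : R -> R) (a b C : R) : b < a ->
  continuity_pt F a -> (forall e, b <= e < a -> F e <= C) -> F a <= C.
Proof.
  intros Hba Hc Hle. destruct (Rle_dec (F a) C) as [|HC]; [assumption|]. exfalso.
  destruct (Hc (F a - C)) as [al [Hal Hd]]; [lra|].
  set (e := Rmax b (a - al/2)).
  assert (He : b <= e < a) by (unfold e; split; [apply Rmax_l|apply Rmax_lub_lt; lra]).
  assert (Hea : Rabs (e - a) < al).
  { rewrite Rabs_left by lra. unfold e. pose proof (Rmax_r b (a - al/2)). lra. }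
  assert (Hdx : D_x no_cond a e) by (split; [exact I|lra]).
  specialize (Hd e (conj Hdx Hea)). specialize (Hle e He).
  simpl in Hd. unfold R_dist in Hd. apply Rabs_def2 in Hd. lra.
Qed.

Lemma bonami_two_point_nonneg (s r rho e : R) : 1 < s < r -> 0 < rho ->
  rho*rho*(r - 1) = s - 1 -> 0 <= e <= 1 ->
  norm2 r (1 + rho*e) (1 - rho*e) <= norm2 s (1 + e) (1 - e).
Proof.
  intros Hs Hrho Hrel He.
  assert (Hrho1 : rho < 1).
  { destruct (Rlt_dec rho 1) as [|Hn]; [assumption|].
    assert (1 <= rho*rho) by nra. nra. }
  assert (Hinner : forall e, 0 <= e < 1 ->
            norm2 r (1 + rho*e) (1 - rho*e) <= norm2 s (1 + e) (1 - e)).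
  { intros e0 He0. rewrite !norm2_mean_pow by nra.
    apply exp_le_compat, log_bonami; assumption. }
  destruct (Rlt_dec e 1) as [He1|He1]; [apply Hinner; lra|].
  replace e with 1 by lra.
  (* at [e = 1] the right-hand side is no longer a [mean_pow]: pass to the limit *)
  set (F := fun e => exp (/ r * ln (mean_pow r (rho*e)))).
  replace (norm2 r (1 + rho*1) (1 - rho*1)) with (F 1)
    by (unfold F; rewrite norm2_mean_pow by nra; reflexivity).
  apply (continuity_pt_le_left F 1 0); [lra| |].
  - apply continuity_pt_filterlim, (ex_derive_continuous F).
    unfold F, mean_pow. auto_derive.
    pose proof (mean_pow_gt0 r (rho*1)). unfold mean_pow in H.
    replace (1 + - (rho*1)) with (1 - rho*1) by ring.
    repeat split; lra.
  - intros e0 He0. unfold F. rewrite <- norm2_mean_pow by nra.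
    eapply Rle_trans; [apply Hinner, He0|].
    replace (1 + 1) with 2 by ring. replace (1 - 1) with 0 by ring.
    apply norm2_le_endpoint; lra.
Qed.

Lemma bonami_two_point (s r rho e : R) : 1 < s < r -> 0 < rho ->
  rho*rho*(r - 1) = s - 1 -> -1 <= e <= 1 ->
  norm2 r (1 + rho*e) (1 - rho*e) <= norm2 s (1 + e) (1 - e).
Proof.
  intros Hs Hrho Hrel He. destruct (Rle_dec 0 e) as [He0|He0].
  - apply bonami_two_point_nonneg; auto. lra.
  - pose proof (bonami_two_point_nonneg s r rho (- e) Hs Hrho Hrel ltac:(lra)) as H.
    replace (1 + rho * - e) with (1 - rho*e) in H by ring.
    replace (1 - rho * - e) with (1 + rho*e) in H by ring.
    replace (1 + - e) with (1 - e) in H by ring.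
    replace (1 - - e) with (1 + e) in H by ring.
    rewrite norm2C, (norm2C s). exact H.
Qed.

(** * Hölder's inequality and the two-function inequality on two points *)

Lemma exp_convex l a b : 0 <= l <= 1 ->
  exp (l*a + (1 - l)*b) <= l * exp a + (1 - l) * exp b.
Proof.
  intro Hl. set (m := l*a + (1 - l)*b).
  (* tangent line of [exp] at [m] *)
  assert (Htangent : forall z, exp m * (1 + (z - m)) <= exp z).
  { intro z. replace (exp z) with (exp m * exp (z - m))
      by (rewrite <- exp_plus; f_equal; ring).
    apply Rmult_le_compat_l; [left; apply exp_pos|apply exp_ineq1_le]. }
  pose proof (Htangent a). pose proof (Htangent b).
  assert (l * (exp m * (1 + (a - m))) + (1 - l) * (exp m * (1 + (b - m))) = exp m)
    by (unfold m; ring).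
  nra.
Qed.

Lemma young_ineq X Y P Q : 0 <= X -> 0 <= Y -> 1 < P -> 1 < Q -> / P + / Q = 1 ->
  X * Y <= rpow X P / P + rpow Y Q / Q.
Proof.
  intros HX HY HP HQ HPQ.
  pose proof (rpow_ge0 X P). pose proof (rpow_ge0 Y Q).
  assert (0 < / P) by (apply Rinv_0_lt_compat; lra).
  assert (0 < / Q) by (apply Rinv_0_lt_compat; lra).
  destruct (Req_dec X 0) as [->|HX0]; [rewrite Rmult_0_l; unfold Rdiv; nra|].
  destruct (Req_dec Y 0) as [->|HY0]; [rewrite Rmult_0_r; unfold Rdiv; nra|].
  rewrite !rpow_exp by lra.
  rewrite <- (exp_ln X) at 1 by lra. rewrite <- (exp_ln Y) at 1 by lra.
  rewrite <- exp_plus.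
  pose proof (exp_convex (/ P) (P * ln X) (Q * ln Y) ltac:(lra)) as Hconv.
  replace (1 - / P) with (/ Q) in Hconv by lra.
  replace (/ P * (P * ln X) + / Q * (Q * ln Y)) with (ln X + ln Y) in Hconv
    by (field; lra).
  unfold Rdiv. lra.
Qed.

Lemma rpow_norm2 p a1 a2 : 0 < p -> rpow (norm2 p a1 a2) p = (rpow a1 p + rpow a2 p)/2.
Proof.
  intro Hp. pose proof (rpow_ge0 a1 p). pose proof (rpow_ge0 a2 p).
  unfold norm2. rewrite rpow_rpow, Rinv_l by lra. apply rpow_1r. lra.
Qed.

Lemma norm2_eq0 p a1 a2 : 0 < p -> 0 <= a1 -> 0 <= a2 ->
  norm2 p a1 a2 = 0 -> a1 = 0 /\ a2 = 0.
Proof.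
  intros Hp H1 H2 H. pose proof (rpow_norm2 p a1 a2 Hp) as E.
  rewrite H, rpow_0l in E.
  pose proof (rpow_ge0 a1 p). pose proof (rpow_ge0 a2 p).
  split; [apply (rpow_eq0 a1 p)|apply (rpow_eq0 a2 p)]; lra.
Qed.

Lemma norm2_scale p k a1 a2 : 0 < p -> 0 <= k -> 0 <= a1 -> 0 <= a2 ->
  norm2 p (k*a1) (k*a2) = k * norm2 p a1 a2.
Proof.
  intros Hp Hk H1 H2. pose proof (rpow_ge0 a1 p). pose proof (rpow_ge0 a2 p).
  unfold norm2. rewrite !rpow_mult_l by assumption.
  replace ((rpow k p * rpow a1 p + rpow k p * rpow a2 p)/2)
    with (rpow k p * ((rpow a1 p + rpow a2 p)/2)) by field.
  rewrite rpow_mult_l, rpow_rpow_inv by (try apply rpow_ge0; lra). reflexivity.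
Qed.

Lemma mean_rpow_div_norm2 p a1 a2 : 0 < p -> 0 <= a1 -> 0 <= a2 -> 0 < norm2 p a1 a2 ->
  (rpow (a1 / norm2 p a1 a2) p + rpow (a2 / norm2 p a1 a2) p)/2 = 1.
Proof.
  intros Hp H1 H2 HA. set (A := norm2 p a1 a2) in *.
  assert (HA' : 0 <= / A) by (left; apply Rinv_0_lt_compat, HA).
  change (a1 / A) with (a1 * / A). change (a2 / A) with (a2 * / A).
  rewrite !rpow_mult_l by assumption.
  replace ((rpow a1 p * rpow (/ A) p + rpow a2 p * rpow (/ A) p)/2)
    with (rpow (norm2 p a1 a2) p * rpow (/ A) p) by (rewrite rpow_norm2; [field|lra]).
  fold A. rewrite <- rpow_mult_l, Rinv_r by lra. apply rpow_1l.
Qed.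

Lemma holder_two_point P Q a1 a2 c1 c2 : 1 < P -> 1 < Q -> / P + / Q = 1 ->
  0 <= a1 -> 0 <= a2 -> 0 <= c1 -> 0 <= c2 ->
  (a1*c1 + a2*c2)/2 <= norm2 P a1 a2 * norm2 Q c1 c2.
Proof.
  intros HP HQ HPQ H1 H2 H3 H4.
  destruct (norm2_ge0 P a1 a2) as [HA|HA].
  2: { destruct (norm2_eq0 P a1 a2) as [-> ->]; try lra. rewrite <- HA. lra. }
  destruct (norm2_ge0 Q c1 c2) as [HC|HC].
  2: { destruct (norm2_eq0 Q c1 c2) as [-> ->]; try lra. rewrite <- HC. lra. }
  set (A := norm2 P a1 a2) in *. set (C := norm2 Q c1 c2) in *.
  (* Young's inequality for the normalised vectors, averaged over the two points *)
  assert (Hyoung : forall a c, 0 <= a -> 0 <= c ->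
            (a/A)*(c/C) <= rpow (a/A) P / P + rpow (c/C) Q / Q).
  { intros a c Ha Hc. apply young_ineq; try apply Rdiv_le_0_compat; lra. }
  pose proof (Hyoung a1 c1 H1 H3). pose proof (Hyoung a2 c2 H2 H4).
  pose proof (mean_rpow_div_norm2 P a1 a2 ltac:(lra) H1 H2 HA) as EA.
  pose proof (mean_rpow_div_norm2 Q c1 c2 ltac:(lra) H3 H4 HC) as EC.
  assert (Hsum : ((a1/A)*(c1/C) + (a2/A)*(c2/C))/2 <= 1).
  { assert (Hmean : / P * ((rpow (a1/A) P + rpow (a2/A) P)/2)
                    + / Q * ((rpow (c1/C) Q + rpow (c2/C) Q)/2) = 1)
      by (unfold A, C; rewrite EA, EC; lra).
    unfold Rdiv in *. lra. }
  replace ((a1/A)*(c1/C) + (a2/A)*(c2/C)) with ((a1*c1 + a2*c2)/(A*C)) in Hsum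
    by (field; lra).
  assert (0 < A*C) by nra.
  apply (Rmult_le_compat_r (A*C)) in Hsum; [|lra].
  replace ((a1*c1 + a2*c2)/(A*C)/2*(A*C)) with ((a1*c1 + a2*c2)/2) in Hsum
    by (field; lra).
  lra.
Qed.

Lemma noise_two_point_hypercontractive (s r sg b1 b2 : R) : 1 < s < r -> 0 < sg < 1 ->
  sg*sg*(r - 1) = s - 1 -> 0 <= b1 -> 0 <= b2 ->
  norm2 r ((1 + sg)/2*b1 + (1 - sg)/2*b2) ((1 - sg)/2*b1 + (1 + sg)/2*b2)
  <= norm2 s b1 b2.
Proof.
  intros Hs Hsg Hrel H1 H2.
  destruct (Req_dec (b1 + b2) 0) as [Hb|Hb].
  { replace b1 with 0 by lra. replace b2 with 0 by lra.
    replace ((1 + sg)/2*0 + (1 - sg)/2*0) with 0 by ring.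
    replace ((1 - sg)/2*0 + (1 + sg)/2*0) with 0 by ring.
    unfold norm2. rewrite !rpow_0l. replace ((0 + 0)/2) with 0 by field.
    rewrite !rpow_0l. lra. }
  (* write [b = k (1 + e, 1 - e)]; then [T_sg b = k (1 + sg e, 1 - sg e)] *)
  set (k := (b1 + b2)/2). set (e := (b1 - b2)/(b1 + b2)).
  assert (Hk : 0 < k) by (unfold k; lra).
  assert (He : -1 <= e <= 1).
  { unfold e. split; [apply Rle_div_r|apply Rle_div_l]; lra. }
  assert (E1 : b1 = k*(1 + e)) by (unfold k, e; field; lra).
  assert (E2 : b2 = k*(1 - e)) by (unfold k, e; field; lra).
  clearbody k e. subst b1 b2.
  assert (0 <= sg*(1 + e)) by (apply Rmult_le_pos; lra).
  assert (0 <= sg*(1 - e)) by (apply Rmult_le_pos; lra).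
  replace ((1 + sg)/2*(k*(1 + e)) + (1 - sg)/2*(k*(1 - e))) with (k*(1 + sg*e)) by field.
  replace ((1 - sg)/2*(k*(1 + e)) + (1 + sg)/2*(k*(1 - e))) with (k*(1 - sg*e)) by field.
  rewrite !norm2_scale by nra.
  apply Rmult_le_compat_l; [lra|].
  apply bonami_two_point; lra.
Qed.

(* By Hölder with the exponent [P' = P/(P-1)] dual to [P], it suffices that [T_sg]
   maps [L^Q] to [L^P'], which holds since [sg^2 (P' - 1) = Q - 1]. *)
Lemma two_function_two_point P Q sg a1 a2 b1 b2 : 1 < P -> 1 < Q -> 0 < sg < 1 ->
  (P - 1)*(Q - 1) = sg*sg -> 0 <= a1 -> 0 <= a2 -> 0 <= b1 -> 0 <= b2 ->
  / 2 * ((1 + sg)/2 * a1 * b1 + (1 - sg)/2 * a1 * b2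
         + (1 - sg)/2 * a2 * b1 + (1 + sg)/2 * a2 * b2)
  <= norm2 P a1 a2 * norm2 Q b1 b2.
Proof.
  intros HP HQ Hsg Hrel H1 H2 H3 H4.
  set (P' := P/(P - 1)).
  assert (HPP' : / P + / P' = 1) by (unfold P'; field; lra).
  assert (HP' : 1 < P').
  { unfold P'. apply Rlt_div_r; lra. }
  assert (HQP' : Q < P').
  { unfold P'. apply Rlt_div_r; nra. }
  assert (Hrel' : sg*sg*(P' - 1) = Q - 1) by (unfold P'; rewrite <- Hrel; field; lra).
  replace (/ 2 * ((1 + sg)/2 * a1 * b1 + (1 - sg)/2 * a1 * b2
                  + (1 - sg)/2 * a2 * b1 + (1 + sg)/2 * a2 * b2))
    with ((a1 * ((1 + sg)/2*b1 + (1 - sg)/2*b2) + a2 * ((1 - sg)/2*b1 + (1 + sg)/2*b2))/2)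
    by field.
  eapply Rle_trans; [apply (holder_two_point P P'); try assumption; nra|].
  apply Rmult_le_compat_l; [apply norm2_ge0|].
  apply noise_two_point_hypercontractive; lra.
Qed.

(** * Tensorisation over the cube *)

Lemma sumR_ext {T} (h1 h2 : T -> R) l :
  (forall v, h1 v = h2 v) -> sumR h1 l = sumR h2 l.
Proof.
  intro H. induction l as [|a l IH]; simpl; [reflexivity|]. rewrite H, IH. reflexivity.
Qed.

Lemma sumR_plus {T} (h1 h2 : T -> R) l :
  sumR (fun v => h1 v + h2 v) l = sumR h1 l + sumR h2 l.
Proof. induction l as [|a l IH]; simpl; [ring|]. rewrite IH. ring. Qed.

Lemma sumR_lincomb4 {T} c1 c2 c3 c4 (h1 h2 h3 h4 : T -> R) l :
  sumR (fun v => c1*h1 v + c2*h2 v + c3*h3 v + c4*h4 v) l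
  = c1*sumR h1 l + c2*sumR h2 l + c3*sumR h3 l + c4*sumR h4 l.
Proof. induction l as [|a l IH]; simpl; [ring|]. rewrite IH. ring. Qed.

Lemma sumR_ge0 {T} (h : T -> R) l : (forall v, 0 <= h v) -> 0 <= sumR h l.
Proof. intro H. induction l as [|a l IH]; simpl; [lra|]. pose proof (H a). lra. Qed.

Lemma sumR_app {T} (h : T -> R) l1 l2 : sumR h (l1 ++ l2) = sumR h l1 + sumR h l2.
Proof. induction l1 as [|a l1 IH]; simpl; [ring|]. rewrite IH. ring. Qed.

Lemma sumR_flat_map {T U} (h : T -> R) (F : U -> list T) l :
  sumR h (flat_map F l) = sumR (fun v => sumR h (F v)) l.
Proof.
  induction l as [|a l IH]; simpl; [reflexivity|]. rewrite sumR_app, IH. reflexivity.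
Qed.

Lemma sumR_cubeS (h : list bool -> R) d :
  sumR h (cube (S d)) = sumR (fun v => h (true :: v) + h (false :: v)) (cube d).
Proof. simpl. rewrite sumR_flat_map. apply sumR_ext. intro v. simpl. ring. Qed.

Definition cube_norm (p : R) (d : nat) (f : list bool -> R) : R :=
  rpow (sumR (fun v => rpow (f v) p) (cube d) / 2^d) (/ p).

(* [E[f(x) g(y)]] for [(x, y) ~ e]; [joint_prob] is its value on indicators. *)
Definition noise_form (sg : R) (d : nat) (f g : list bool -> R) : R :=
  sumR (fun x => sumR (fun y => f x * g y * (/ 2 ^ d) * noise_kernel sg x y)
                      (cube d)) (cube d).

Lemma cube_normS p d f : 0 < p ->
  cube_norm p (S d) f
  = norm2 p (cube_norm p d (fun v => f (true :: v)))
            (cube_norm p d (fun v => f (false :: v))).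
Proof.
  intro Hp.
  assert (Hmean : forall g : list bool -> R,
            0 <= sumR (fun v => rpow (g v) p) (cube d) / 2^d).
  { intro g. apply Rdiv_le_0_compat; [|apply pow_lt; lra].
    apply sumR_ge0. intro. apply rpow_ge0. }
  unfold norm2, cube_norm. rewrite !rpow_rpow, Rinv_l, !rpow_1r by (auto; lra).
  f_equal. rewrite sumR_cubeS, sumR_plus. simpl. field. apply pow_nonzero. lra.
Qed.

Lemma noise_formS sg d f g :
  noise_form sg (S d) f g
  = / 2 * ((1 + sg)/2 * noise_form sg d (fun v => f (true :: v)) (fun v => g (true :: v))
         + (1 - sg)/2 * noise_form sg d (fun v => f (true :: v)) (fun v => g (false :: v))
         + (1 - sg)/2 * noise_form sg d (fun v => f (false :: v)) (fun v => g (true :: v))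
         + (1 + sg)/2 * noise_form sg d (fun v => f (false :: v)) (fun v => g (false :: v))).
Proof.
  unfold noise_form. rewrite sumR_cubeS.
  rewrite !Rmult_plus_distr_l, <- !Rmult_assoc, <- sumR_lincomb4.
  apply sumR_ext. intro x.
  rewrite !sumR_cubeS, <- sumR_plus, <- sumR_lincomb4.
  apply sumR_ext. intro y.
  simpl. field. apply pow_nonzero. lra.
Qed.

Lemma noise_form_le_cube_norms P Q sg d f g : 1 < P -> 1 < Q -> 0 < sg < 1 ->
  (P - 1)*(Q - 1) = sg*sg -> (forall v, 0 <= f v) -> (forall v, 0 <= g v) ->
  noise_form sg d f g <= cube_norm P d f * cube_norm Q d g.
Proof.
  intros HP HQ Hsg Hrel. revert f g.
  induction d as [|d IH]; intros f g Hf Hg.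
  - unfold noise_form, cube_norm. simpl.
    replace ((rpow (f []) P + 0) / 1) with (rpow (f []) P) by field.
    replace ((rpow (g []) Q + 0) / 1) with (rpow (g []) Q) by field.
    rewrite !rpow_rpow_inv by (auto; lra). lra.
  - rewrite noise_formS, !cube_normS by lra.
    eapply Rle_trans;
      [|apply (two_function_two_point P Q sg); try assumption; apply rpow_ge0].
    apply Rmult_le_compat_l; [lra|].
    assert (0 <= (1 + sg)/2) by lra. assert (0 <= (1 - sg)/2) by lra.
    rewrite !(Rmult_assoc ((1 + sg)/2)), !(Rmult_assoc ((1 - sg)/2)).
    repeat apply Rplus_le_compat; apply Rmult_le_compat_l; auto.
Qed.

Lemma ind_ge0 b : 0 <= ind b.
Proof. destruct b; simpl; lra. Qed.

Lemma rpow_ind b q : rpow (ind b) q = ind b.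
Proof. destruct b; simpl; [apply rpow_1l|apply rpow_0l]. Qed.

Lemma cube_norm_ind p d (B : subset_V) :
  cube_norm p d (fun v => ind (B v)) = rpow (mu d B) (/ p).
Proof. unfold cube_norm, mu. do 2 f_equal. apply sumR_ext. intro. apply rpow_ind. Qed.

Lemma joint_prob_le_mu_rpow p q sg d (A B : subset_V) : 1 < p -> 1 < q -> 0 < sg < 1 ->
  (p - 1)*(q - 1) = sg*sg ->
  joint_prob d sg B A <= rpow (mu d B) (/ q) * rpow (mu d A) (/ p).
Proof.
  intros Hp Hq Hsg Hrel.
  rewrite <- !cube_norm_ind.
  apply (noise_form_le_cube_norms q p sg d); try assumption; try (intro; apply ind_ge0).
  lra.
Qed.

(** * Robust expansion *)

Lemma expansion_of_two_function_bound (p q gamma m a b : R) :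
  1 < p -> 1 < q -> (p - 1)*(q - 1) <= 1 -> 0 <= gamma -> 1 <= m ->
  0 < a <= 1/m -> 0 <= b -> gamma * a <= rpow b (/ q) * rpow a (/ p) ->
  rpow gamma q * Rpower m (1 + q/p - q) <= b / a.
Proof.
  intros Hp Hq Hpq Hgamma Hm Ha Hb Hbound.
  destruct Hgamma as [Hgamma|<-].
  2: { rewrite rpow_0l, Rmult_0_l. apply Rdiv_le_0_compat; lra. }
  destruct Hb as [Hb|<-].
  2: { rewrite rpow_0l, Rmult_0_l in Hbound. nra. }
  assert (Hlog : ln gamma + ln a <= / q * ln b + / p * ln a).
  { rewrite !rpow_exp, <- exp_plus in Hbound by lra.
    rewrite <- ln_mult, <- (ln_exp (/ q * ln b + / p * ln a)) by nra.
    apply ln_le; nra. }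
  assert (Hlna : ln a <= - ln m).
  { rewrite <- ln_Rinv by lra. apply ln_le; [lra|]. unfold Rdiv in Ha. lra. }
  (* the exponent [q - q/p - 1] of [a] is nonpositive as [(p-1)(q-1) <= 1] *)
  assert (Hexp : q - q/p - 1 <= 0).
  { apply (Rmult_le_reg_r p); [lra|]. unfold Rdiv. field_simplify; nra. }
  rewrite rpow_exp by lra. unfold Rpower. rewrite <- exp_plus.
  rewrite <- (exp_ln (b / a)) by (apply Rdiv_lt_0_compat; lra).
  apply exp_le_compat.
  unfold Rdiv. rewrite ln_mult, ln_Rinv by (try apply Rinv_0_lt_compat; lra).
  apply (Rmult_le_compat_l q) in Hlog; [|lra].
  replace (q * (/ q * ln b + / p * ln a)) with (ln b + q / p * ln a) in Hlog
    by (field; lra).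
  assert ((q - q/p - 1) * (- ln m) <= (q - q/p - 1) * ln a)
    by (apply Rmult_le_compat_neg_l; lra).
  unfold Rdiv in *. nra.
Qed.

Theorem lemma6p2 (d : nat) (c p q gamma m : R) :
  1 < c ->
  1 <= p -> 1 <= q ->
  (p - 1) * (q - 1) = (1 - 1 / c) ^ 2 ->
  0 <= gamma <= 1 ->
  1 <= m ->
  Phi_r_ge d (1 - 1 / c) (1 / m) gamma
    (rpow gamma q * Rpower m (1 + q / p - q)).
Proof.
  intros Hc Hp Hq Hrel Hgamma Hm r [A [B [HA [HAm [Hcond ->]]]]].
  set (sg := 1 - 1/c) in *.
  assert (Hsg : 0 < sg < 1).
  { assert (0 < 1/c) by (apply Rdiv_lt_0_compat; lra).
    assert (1/c < 1) by (apply (Rdiv_lt_1 1 c); lra).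
    unfold sg. lra. }
  replace (sg ^ 2) with (sg * sg) in Hrel by ring.
  assert (Hp1 : 1 < p) by (destruct Hp as [|<-]; [assumption|nra]).
  assert (Hq1 : 1 < q) by (destruct Hq as [|<-]; [assumption|nra]).
  assert (Hjoint : gamma * mu d A <= joint_prob d sg B A).
  { unfold cond_prob in Hcond. apply Rge_le in Hcond.
    apply (Rmult_le_compat_r (mu d A)) in Hcond; [|lra].
    unfold Rdiv in Hcond. rewrite Rmult_assoc, Rinv_l, Rmult_1_r in Hcond by lra.
    exact Hcond. }
  pose proof (joint_prob_le_mu_rpow p q sg d A B Hp1 Hq1 Hsg Hrel) as Hhyper.
  assert (HB : 0 <= mu d B).
  { apply Rdiv_le_0_compat; [apply sumR_ge0; intro; apply ind_ge0|apply pow_lt; lra]. }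
  apply Rle_ge, (expansion_of_two_function_bound p q gamma m); try lra.
  nra.
Qed.
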